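(* Let $n>7$ with $n\equiv 3\pmod 4$ and put $k=\frac{n-5}{2}$. In the automaton $\mathcal{F}_n$, the minimum length of a word $w$ over $\{a,b\}$ with $\{q_2,q_4\}\cdot w=\{q_{k+2},q_{k+4}\}$ is exactly $\frac{n^2}{4}+\frac{5n}{4}-7$.
   Context: Words act on states letter by letter from left to right, and on sets elementwise. For odd $n\ge7$, the automaton $\mathcal{F}_n$ has states $q_1,\dots,q_n$ and two letters $a,b$, both permutations, defined as follows (every state not mentioned for a letter is fixed by it): $a$ acts as the 4-cycle $q_1\to q_2\to q_3\to q_4\to q_1$; $b$ swaps $q_1$ and $q_6$; for each $1\le i\le\frac{n-3}{2}$, the states $q_{2i+1}$ and $q_{2i+3}$ are swapped by $b$ if $i$ is odd and by $a$ if $i$ is even; for each $3\le j\le\frac{n-3}{2}$, the states $q_{2j}$ and $q_{2j+2}$ are swapped by $a$ if $j$ is odd and by $b$ if $j$ is even. *)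

From mathcomp Require Import all_boot.
Set Implicit Arguments. Unset Strict Implicit. Unset Printing Implicit Defensive.

(* States q_1..q_n are represented by the natural numbers 1..n. *)
Inductive letter := La | Lb.

Definition swap_in (ps : seq (nat * nat)) (q : nat) : nat :=
  foldr (fun p r => if q == p.1 then p.2 else if q == p.2 then p.1 else r) q ps.

Definition odd_pairs (n : nat) (par : bool) : seq (nat * nat) :=
  [seq (2 * i + 1, 2 * i + 3) | i <- iota 1 ((n - 3) %/ 2) & odd i == par].

Definition even_pairs (n : nat) (par : bool) : seq (nat * nat) :=
  [seq (2 * j, 2 * j + 2) | j <- iota 3 ((n - 3) %/ 2 - 2) & odd j == par].

Definition act_a (n q : nat) : nat :=
  if q == 1 then 2 else if q == 2 then 3 else if q == 3 then 4
  else if q == 4 then 1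
  else swap_in (odd_pairs n false ++ even_pairs n true) q.

Definition act_b (n q : nat) : nat :=
  swap_in ((1, 6) :: odd_pairs n true ++ even_pairs n false) q.

Definition act_letter (n : nat) (l : letter) (q : nat) : nat :=
  match l with La => act_a n q | Lb => act_b n q end.

Definition act_word (n : nat) (w : seq letter) (q : nat) : nat :=
  foldl (fun q l => act_letter n l q) q w.

Definition act_set (n : nat) (S : seq nat) (w : seq letter) : seq nat :=
  [seq act_word n w q | q <- S].

(* Relabel the states as the points of Z/n so that each letter acts as a reflection of the n-gon
   followed by the transposition of 0 and 1.  A pair of states is then a chord, which a letter moves
   rigidly unless exactly one endpoint lies in {0, 1}, in which case its length changes by one.
   The least number of letters bringing a chord to the target chord has an explicit piecewise
   closed form [dist]; it is certified by checking that no letter lowers [dist] by more than one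
   and that, away from the target, some letter lowers it by exactly one.  The starting pair
   {q_2, q_4} is the chord {0, 1}, at distance n^2/4 + 5n/4 - 7. *)

From Stdlib Require Import ZArith Lia.

Open Scope Z_scope.

Definition nstates t := 4*t+3.

(* A chord {x, x + h} of Z/n with 1 <= h <= (n-1)/2 is stored as (h, Q), Q being the odd
   representative modulo 2n of its first endpoint x; in these coordinates every reflection of
   the n-gon acts on Q as Q |-> c - Q (mod 2n). *)
Definition mirror t c Q := if Q <=? c then c - Q else c + 2 * nstates t - Q.

Definition chord_a t (c : Z * Z) : Z * Z :=
  let '(h, Q) := c in let n := nstates t in
  if Z.odd h then
    if h =? 1 then
      (if Q =? n-2 then (1, n) else if Q =? 2*n-3 then (2, n) else if Q =? 2*n-1 then (2, 2*n-1)
       else (1, mirror t (2*n-2) Q))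
    else if h =? 2*t+1 then
      (if Q =? 2*n-h-2 then (h, 2*n-h) else if Q =? 2*n-1 then (h, 1)
       else if Q =? n-h-1 then (h-1, 1) else if Q =? n-2 then (h-1, n+1-h)
       else (h, mirror t (2*n-1-h) Q))
    else if Q =? n-h-1 then (h-1, 1)
    else if Q =? n-2 then (h-1, n+1-h)
    else if Q =? 2*n-h-2 then (h+1, n)
    else if Q =? 2*n-1 then (h+1, 2*n-h)
    else (h, mirror t (2*n-1-h) Q)
  else
    if Q =? n-h-2 then (h+1, n)
    else if Q =? n-2 then (h-1, 2*n+1-h)
    else if Q =? 2*n-h-1 then (h-1, 1)
    else if Q =? 2*n-1 then (h+1, n-h)
    else (h, mirror t (n-1-h) Q).

Definition chord_b t (c : Z * Z) : Z * Z :=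
  let '(h, Q) := c in let n := nstates t in
  if Z.odd h then
    if h =? 1 then
      (if Q =? n then (1, n) else if Q =? 1 then (2, 2*n-1) else if Q =? 2*n-1 then (2, n)
       else (1, mirror t (2*n) Q))
    else if h =? 2*t+1 then
      (if Q =? 1 then (h, 1) else if Q =? 2*n-h then (h, 2*n-h)
       else if Q =? n-h+1 then (h-1, 1) else if Q =? n then (h-1, n+1-h)
       else (h, mirror t (2*n+1-h) Q))
    else if Q =? 1 then (h+1, 2*n-h)
    else if Q =? n-h+1 then (h-1, 1)
    else if Q =? n then (h-1, n+1-h)
    else if Q =? 2*n-h then (h+1, n)
    else (h, mirror t (2*n+1-h) Q)
  else
    if Q =? 1 then (h+1, n-h)
    else if Q =? n-h then (h+1, n)
    else if Q =? n then (h-1, 2*n+1-h)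
    else if Q =? 2*n-h+1 then (h-1, 1)
    else (h, mirror t (n+1-h) Q).

Definition chord_step t (l : letter) (c : Z * Z) : Z * Z :=
  match l with La => chord_a t c | Lb => chord_b t c end.

Definition chord_valid t (c : Z * Z) : Prop :=
  let '(h, Q) := c in 1 <= h <= 2*t+1 /\ exists i, Q = 2*i+1 /\ 1 <= Q <= 2 * nstates t - 1.

(* The number of letters needed to move a chord to the target chord, of length 2t+1 and second
   coordinate 7t+5 or 7t+6 (whichever is odd): a base value depending on the length only, plus a
   piecewise affine function of Q. *)

Definition dist_one t Q := let n := nstates t in
  if Q <=? 1 then 0 else if Q <=? n-1 then Q else 2*n-1-Q.

Definition dist_odd t j Q :=
  let n := nstates t in let h := 2*j+1 in
  if Q <=? 1 then 1 - Q
  else if Q <=? n-h then Q+1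
  else if Q <=? n-h+2 then (if j =? 1 then n else 2*(n-h)+5-Q)
  else if Q <=? n - (j+1) then Q+1
  else if Q <=? n-2 then 2*n+1-h-Q
  else if Q =? n-1 then n+4-h
  else if Q <=? 2*n-h-2 then 2*n+1-h-Q
  else if Q <=? 2*n-h then Q-(2*n-h-1)
  else if Q <=? 2*n-(j+1) then Q-(2*n-h+1)
  else 2*n-1-Q.

Definition dist_even_generic t j Q :=
  let n := nstates t in let h := 2*j in let e := 2*t+1-j in
  if Q <=? 1 then Q
  else if Q <=? e then Q-2
  else if Q <=? n-h-2 then n-h-2-Q
  else if Q <=? n-h then n-h-Q
  else if Q <=? n-1 then Q-(n-h-2)
  else if Q <=? n+1 then n+h+4-Q
  else if Q <=? n+e then Q-(n-h-2)
  else 2*n+2-Q.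

Definition dist_even t j Q :=
  let n := nstates t in let h := 2*j in let e := 2*t+1-j in
  if j =? 1 then
    (if n <=? Q then (if Q =? n then 4 else if Q <=? n+e then Q-(n-h-2)-1 else 2*n+1-Q)
     else dist_even_generic t j Q)
  else dist_even_generic t j Q.

Definition dist_top t Q :=
  if Q <=? 2 then t+3-Q
  else if Q <=? 2*t+2 then Q+t-1
  else if Q <=? 2*t+4 then 5*t+7-Q
  else if Q <=? 3*t+2 then Q+t-1
  else if Q <=? 6*t+3 then 7*t+4-Q
  else if Q <=? 7*t+5 then 7*t+5-Q
  else Q-(7*t+6).

Definition base_odd t j := 5*t+4 + (t-1-j) * (4*t+6).
Definition base_even t j := base_odd t j + nstates t - 2*j + 1.
Definition base_one t := base_odd t 1 + nstates t + 2.

Definition dist t (c : Z * Z) : Z :=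
  let '(h, Q) := c in
  if h =? 2*t+1 then dist_top t Q
  else if h =? 1 then base_one t + dist_one t Q
  else if Z.odd h then base_odd t (h/2) + dist_odd t (h/2) Q
  else base_even t (h/2) + dist_even t (h/2) Q.

Lemma Zodd_2j1 j : Z.odd (2*j+1) = true.
Proof. rewrite Z.add_comm; apply Z.odd_add_mul_2. Qed.

Lemma Zodd_2j j : Z.odd (2*j) = false.
Proof. rewrite <- (Z.add_0_l (2*j)), Z.odd_add_mul_2; reflexivity. Qed.

Lemma dist_top_eq t h Q : h = 2*t+1 -> dist t (h, Q) = dist_top t Q.
Proof. intros ->; unfold dist; now rewrite Z.eqb_refl. Qed.

Lemma dist_one_eq t Q : 2 <= t -> dist t (1, Q) = base_one t + dist_one t Q.
Proof.
  intros Ht; unfold dist.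
  replace (1 =? 2*t+1) with false by (symmetry; apply Z.eqb_neq; lia).
  now rewrite Z.eqb_refl.
Qed.

Lemma dist_odd_eq t h j Q : h = 2*j+1 -> 1 <= j <= t-1 ->
  dist t (h, Q) = base_odd t j + dist_odd t j Q.
Proof.
  intros -> Hj; unfold dist.
  replace (2*j+1 =? 2*t+1) with false by (symmetry; apply Z.eqb_neq; lia).
  replace (2*j+1 =? 1) with false by (symmetry; apply Z.eqb_neq; lia).
  rewrite Zodd_2j1.
  now replace ((2*j+1)/2) with j by (apply Z.div_unique with 1; lia).
Qed.

Lemma dist_even_eq t h j Q : h = 2*j -> 1 <= j <= t ->
  dist t (h, Q) = base_even t j + dist_even t j Q.
Proof.
  intros -> Hj; unfold dist.
  replace (2*j =? 2*t+1) with false by (symmetry; apply Z.eqb_neq; lia).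
  replace (2*j =? 1) with false by (symmetry; apply Z.eqb_neq; lia).
  rewrite Zodd_2j.
  now replace ((2*j)/2) with j by (apply Z.div_unique with 0; lia).
Qed.

Lemma base_odd_succ t j : base_odd t (j+1) = base_odd t j - (4*t+6).
Proof. unfold base_odd; ring. Qed.

Lemma base_odd_top t : base_odd t t = t - 2.
Proof. unfold base_odd; ring. Qed.

Lemma base_odd_ge0 t j : 2 <= t -> j <= t -> 0 <= base_odd t j.
Proof. intros; unfold base_odd; nia. Qed.

Lemma Zodd_true x : Z.odd x = true -> exists k, x = 2*k+1.
Proof. intros H; apply Z.odd_spec in H; exact H. Qed.

Lemma Zodd_false x : Z.odd x = false -> exists k, x = 2*k.
Proof.
  intros H; apply Z.even_spec; rewrite <- Z.negb_odd, H; reflexivity.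
Qed.

Ltac case_ifs :=
  repeat (match goal with |- context[if ?c then _ else _] =>
            lazymatch c with context[if _ then _ else _] => fail | _ =>
            let H := fresh "H" in destruct c eqn:H;
            [ first [apply Z.leb_le in H | apply Z.eqb_eq in H | apply Z.ltb_lt in H
                    | (apply Zodd_true in H; destruct H as [? H]) | idtac]
            | first [apply Z.leb_gt in H | apply Z.eqb_neq in H | apply Z.ltb_ge in H
                    | (apply Zodd_false in H; destruct H as [? H]) | idtac]] end end).

Ltac rewrite_parity :=
  repeat match goal with
  | |- context[Z.odd (2*?j+1)] => rewrite (Zodd_2j1 j)
  | |- context[Z.odd (2*?j)] => rewrite (Zodd_2j j)
  | |- context[Z.odd 1] => change (Z.odd 1) with true
  end.

Ltac rewrite_dist j :=
  repeat match goal with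
  | |- context[dist ?t (?h, ?Q)] =>
     first [ rewrite (dist_top_eq t h Q) by lia
           | rewrite (dist_odd_eq t h j Q) by lia | rewrite (dist_odd_eq t h (j-1) Q) by lia
           | rewrite (dist_odd_eq t h (j+1) Q) by lia
           | rewrite (dist_even_eq t h j Q) by lia | rewrite (dist_even_eq t h (j+1) Q) by lia
           | rewrite (dist_even_eq t h (j-1) Q) by lia
           | replace h with 1 by lia; rewrite (dist_one_eq t Q) by lia ]
  end.

Ltac base_facts t j :=
  pose proof (base_odd_succ t j); pose proof (base_odd_succ t (j-1)); pose proof (base_odd_top t);
  replace (j-1+1) with j in * by ring;
  unfold base_even, base_one in *; unfold nstates in *.

Ltac solve_dist t j :=
  case_ifs; try lia; rewrite_dist j; base_facts t j;
  unfold dist_odd, dist_even, dist_even_generic, dist_top, dist_one, mirror in *;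
  unfold nstates in *; case_ifs; lia.

Ltac unfold_step l := destruct l; unfold chord_step, chord_a, chord_b; rewrite_parity.

Lemma dist_lip_odd t l j Q : 2 <= t -> 1 <= j <= t-1 -> chord_valid t (2*j+1, Q) ->
  dist t (2*j+1, Q) <= dist t (chord_step t l (2*j+1, Q)) + 1.
Proof.
  intros Ht Hj [_ [i [HQ HQr]]]; rewrite (dist_odd_eq t (2*j+1) j) by lia.
  unfold_step l; solve_dist t j.
Qed.

Lemma dist_lip_even t l j Q : 2 <= t -> 1 <= j <= t -> chord_valid t (2*j, Q) ->
  dist t (2*j, Q) <= dist t (chord_step t l (2*j, Q)) + 1.
Proof.
  intros Ht Hj [_ [i [HQ HQr]]]; rewrite (dist_even_eq t (2*j) j) by lia.
  destruct (Z.eq_dec j 1) as [->|Hj1]; [|destruct (Z.eq_dec j t) as [->|Hjt]].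
  - unfold_step l; solve_dist t 1.
  - unfold_step l; solve_dist t t.
  - unfold_step l; solve_dist t j.
Qed.

Lemma dist_lip_one t l Q : 2 <= t -> chord_valid t (1, Q) ->
  dist t (1, Q) <= dist t (chord_step t l (1, Q)) + 1.
Proof.
  intros Ht [_ [i [HQ HQr]]]; rewrite (dist_one_eq t) by lia.
  unfold_step l; solve_dist t 1.
Qed.

Lemma dist_lip_top t l Q : 2 <= t -> chord_valid t (2*t+1, Q) ->
  dist t (2*t+1, Q) <= dist t (chord_step t l (2*t+1, Q)) + 1.
Proof.
  intros Ht [_ [i [HQ HQr]]]; rewrite (dist_top_eq t) by lia.
  unfold_step l; solve_dist t t.
Qed.

Ltac descend t j :=
  first [ exists La; unfold chord_step, chord_a; rewrite_parity; solve_dist t j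
        | exists Lb; unfold chord_step, chord_b; rewrite_parity; solve_dist t j ].

Lemma dist_desc_odd t j Q : 2 <= t -> 1 <= j <= t-1 -> chord_valid t (2*j+1, Q) ->
  exists l, dist t (chord_step t l (2*j+1, Q)) + 1 = dist t (2*j+1, Q).
Proof.
  intros Ht Hj [_ [i [HQ HQr]]]; rewrite (dist_odd_eq t (2*j+1) j) by lia.
  unfold dist_odd; case_ifs; descend t j.
Qed.

Lemma dist_desc_even t j Q : 2 <= t -> 1 <= j <= t -> chord_valid t (2*j, Q) ->
  exists l, dist t (chord_step t l (2*j, Q)) + 1 = dist t (2*j, Q).
Proof.
  intros Ht Hj [_ [i [HQ HQr]]]; rewrite (dist_even_eq t (2*j) j) by lia.
  unfold dist_even, dist_even_generic.
  destruct (Z.eq_dec j 1) as [->|Hj1]; [|destruct (Z.eq_dec j t) as [->|Hjt]].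
  - case_ifs; descend t 1.
  - case_ifs; descend t t.
  - case_ifs; descend t j.
Qed.

Lemma dist_desc_one t Q : 2 <= t -> chord_valid t (1, Q) ->
  exists l, dist t (chord_step t l (1, Q)) + 1 = dist t (1, Q).
Proof.
  intros Ht [_ [i [HQ HQr]]]; rewrite (dist_one_eq t) by lia.
  unfold dist_one; case_ifs; descend t 1.
Qed.

Lemma dist_desc_top t Q : 2 <= t -> chord_valid t (2*t+1, Q) -> 0 < dist t (2*t+1, Q) ->
  exists l, dist t (chord_step t l (2*t+1, Q)) + 1 = dist t (2*t+1, Q).
Proof.
  intros Ht [_ [i [HQ HQr]]]; rewrite (dist_top_eq t) by lia; intros Hpos.
  unfold dist_top in *; case_ifs; descend t t.
Qed.

Lemma chord_length_cases t h : 2 <= t -> 1 <= h <= 2*t+1 ->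
  h = 1 \/ h = 2*t+1 \/ (exists j, h = 2*j+1 /\ 1 <= j <= t-1) \/ (exists j, h = 2*j /\ 1 <= j <= t).
Proof.
  intros Ht Hh; destruct (Z.Even_or_Odd h) as [[j Hj]|[j Hj]].
  - right; right; right; exists j; lia.
  - destruct (Z.eq_dec j 0); [left; lia|]; destruct (Z.eq_dec j t); [right; left; lia|].
    right; right; left; exists j; lia.
Qed.

Ltac chord_cases t h :=
  match goal with Ht : 2 <= t, Hh : 1 <= h <= 2*t+1 |- _ =>
    destruct (chord_length_cases t h Ht Hh) as [->|[->|[[?j [-> ?Hj]]|[?j [-> ?Hj]]]]] end.

Lemma dist_lip t l c : 2 <= t -> chord_valid t c -> dist t c <= dist t (chord_step t l c) + 1.
Proof.
  destruct c as [h Q]; intros Ht Hv; pose proof Hv as [Hh _]; chord_cases t h.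
  - now apply dist_lip_one.
  - now apply dist_lip_top.
  - now apply dist_lip_odd.
  - now apply dist_lip_even.
Qed.

Lemma dist_desc t c : 2 <= t -> chord_valid t c -> 0 < dist t c ->
  exists l, dist t (chord_step t l c) + 1 = dist t c.
Proof.
  destruct c as [h Q]; intros Ht Hv Hpos; pose proof Hv as [Hh _]; chord_cases t h.
  - now apply dist_desc_one.
  - now apply dist_desc_top.
  - now apply dist_desc_odd.
  - now apply dist_desc_even.
Qed.

Lemma dist_ge0 t c : 2 <= t -> chord_valid t c -> 0 <= dist t c.
Proof.
  destruct c as [h Q]; intros Ht Hv; pose proof Hv as [Hh [i [HQ HQr]]]; chord_cases t h.
  - rewrite dist_one_eq by lia; pose proof (base_odd_ge0 t 1).
    unfold base_one, dist_one in *; unfold nstates in *; case_ifs; lia.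
  - rewrite dist_top_eq by lia; unfold dist_top; unfold nstates in *; case_ifs; lia.
  - rewrite (dist_odd_eq t _ j) by lia; pose proof (base_odd_ge0 t j).
    unfold dist_odd in *; unfold nstates in *; case_ifs; lia.
  - rewrite (dist_even_eq t _ j) by lia; pose proof (base_odd_ge0 t j).
    unfold base_even, dist_even, dist_even_generic in *; unfold nstates in *; case_ifs; lia.
Qed.

Lemma dist_eq0 t c : 2 <= t -> chord_valid t c -> dist t c = 0 ->
  fst c = 2*t+1 /\ (snd c = 7*t+5 \/ snd c = 7*t+6).
Proof.
  destruct c as [h Q]; intros Ht Hv; pose proof Hv as [Hh [i [HQ HQr]]]; cbn [fst snd].
  chord_cases t h.
  - rewrite dist_one_eq by lia; pose proof (base_odd_ge0 t 1).
    unfold base_one, dist_one in *; unfold nstates in *; case_ifs; lia.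
  - rewrite dist_top_eq by lia; unfold dist_top; unfold nstates in *; case_ifs; lia.
  - rewrite (dist_odd_eq t _ j) by lia; assert (0 < base_odd t j) by (unfold base_odd; nia).
    unfold dist_odd in *; unfold nstates in *; case_ifs; lia.
  - rewrite (dist_even_eq t _ j) by lia; pose proof (base_odd_ge0 t j).
    unfold base_even, dist_even, dist_even_generic in *; unfold nstates in *; case_ifs; lia.
Qed.

(* Of the two zeros of [dist], only one has an odd second coordinate. *)
Lemma dist_eq0_unique t c c' : 2 <= t -> chord_valid t c -> chord_valid t c' ->
  dist t c = 0 -> dist t c' = 0 -> c = c'.
Proof.
  intros Ht Hv Hv' H0 H0'.
  destruct (dist_eq0 t c Ht Hv H0) as [Hh HQ], (dist_eq0 t c' Ht Hv' H0') as [Hh' HQ'].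
  destruct c as [h Q], c' as [h' Q']; cbn [fst snd] in *.
  destruct Hv as [_ [i [-> _]]], Hv' as [_ [i' [-> _]]]; f_equal; lia.
Qed.

Definition perm_a t x :=
  let n := nstates t in if x =? n-2 then 0 else if x =? n-1 then 1 else n-1-x.

Definition perm_b t x := if x <=? 1 then x else nstates t + 1 - x.

Definition perm t (l : letter) x := match l with La => perm_a t x | Lb => perm_b t x end.

Definition odd_rep t x := if Z.odd x then x else x + nstates t.

Definition chord_sorted t u v :=
  if v - u <=? 2*t+1 then (v - u, odd_rep t u) else (nstates t - (v - u), odd_rep t v).

Definition chord_of t x y := if x <? y then chord_sorted t x y else chord_sorted t y x.

Definition chord_lo t Q := if Q <? nstates t then Q else Q - nstates t.

Definition chord_hi t h Q :=
  if chord_lo t Q + h <? nstates t then chord_lo t Q + h else chord_lo t Q + h - nstates t.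

Ltac unfold_coords :=
  unfold perm, perm_a, perm_b, chord_of, chord_sorted, odd_rep, chord_hi, chord_lo, mirror in *;
  unfold nstates in *.

Lemma chord_of_sym t x y : x <> y -> chord_of t x y = chord_of t y x.
Proof.
  intros; unfold chord_of; destruct (Z.ltb_spec x y), (Z.ltb_spec y x); try lia; reflexivity.
Qed.

Lemma chord_of_valid t x y : 2 <= t -> 0 <= x < nstates t -> 0 <= y < nstates t -> x <> y ->
  chord_valid t (chord_of t x y).
Proof.
  intros Ht Hx Hy Hxy; unfold_coords; case_ifs; unfold chord_valid, nstates; (split; [lia|]);
  first [ match goal with H : _ = 2*?k+1 |- exists _, _ => exists k; lia end
        | match goal with H : _ = 2*?k |- exists _, _ => exists (k + 2*t+1); lia end ].
Qed.

Lemma chord_of_ends t x y : 2 <= t -> 0 <= x < nstates t -> 0 <= y < nstates t -> x <> y ->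
  let '(h, Q) := chord_of t x y in
  (chord_lo t Q = x /\ chord_hi t h Q = y) \/ (chord_lo t Q = y /\ chord_hi t h Q = x).
Proof.
  intros; unfold chord_of, chord_sorted, odd_rep; case_ifs; cbv beta iota; unfold_coords; case_ifs; lia.
Qed.

Lemma chord_of_inj t x y x' y' : 2 <= t ->
  0 <= x < nstates t -> 0 <= y < nstates t -> x <> y ->
  0 <= x' < nstates t -> 0 <= y' < nstates t -> x' <> y' ->
  chord_of t x y = chord_of t x' y' -> (x = x' /\ y = y') \/ (x = y' /\ y = x').
Proof.
  intros Ht Hx Hy Hxy Hx' Hy' Hxy' E.
  pose proof (chord_of_ends t x y Ht Hx Hy Hxy) as Hends.
  pose proof (chord_of_ends t x' y' Ht Hx' Hy' Hxy') as Hends'.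
  rewrite E in Hends; destruct (chord_of t x' y'); cbv beta iota in *; lia.
Qed.

Lemma perm_inj t l x y : 2 <= t -> 0 <= x < nstates t -> 0 <= y < nstates t -> x <> y ->
  perm t l x <> perm t l y.
Proof. destruct l; intros; unfold_coords; case_ifs; lia. Qed.

Lemma chord_of_perm_ends t l h Q : 2 <= t -> chord_valid t (h, Q) ->
  chord_of t (perm t l (chord_lo t Q)) (perm t l (chord_hi t h Q)) = chord_step t l (h, Q).
Proof.
  intros Ht [Hh [i [HQ HQr]]].
  destruct (Z.Even_or_Odd h) as [[j Hj]|[j Hj]]; subst h;
    unfold_step l; unfold_coords; case_ifs; f_equal; lia.
Qed.

Lemma chord_of_perm t l x y : 2 <= t -> 0 <= x < nstates t -> 0 <= y < nstates t -> x <> y ->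
  chord_of t (perm t l x) (perm t l y) = chord_step t l (chord_of t x y).
Proof.
  intros Ht Hx Hy Hxy.
  pose proof (chord_of_valid t x y Ht Hx Hy Hxy) as Hv.
  pose proof (chord_of_ends t x y Ht Hx Hy Hxy) as Hends.
  destruct (chord_of t x y) as [h Q].
  rewrite <- chord_of_perm_ends by assumption.
  destruct Hends as [[-> ->]|[-> ->]]; [reflexivity|].
  apply chord_of_sym, perm_inj; assumption.
Qed.

Lemma dist_start t : 2 <= t -> dist t (chord_of t 0 1) = 4*t*t + 11*t - 1.
Proof.
  intros Ht.
  replace (chord_of t 0 1) with (1, nstates t) by (unfold_coords; case_ifs; f_equal; lia).
  rewrite dist_one_eq by lia; unfold base_one, base_odd, dist_one, nstates; case_ifs; nia.
Qed.

Lemma dist_target_even s : 1 <= s -> dist (2*s) (chord_of (2*s) (2*s) (6*s+2)) = 0.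
Proof.
  intros; unfold_coords; case_ifs; try lia; rewrite dist_top_eq by lia; unfold dist_top; case_ifs; lia.
Qed.

Lemma dist_target_odd s : 1 <= s -> dist (2*s+1) (chord_of (2*s+1) (6*s+6) (2*s+2)) = 0.
Proof.
  intros; unfold_coords; case_ifs; try lia; rewrite dist_top_eq by lia; unfold dist_top; case_ifs; lia.
Qed.

Close Scope Z_scope.

From mathcomp Require Import all_boot zify.

Set Implicit Arguments. Unset Strict Implicit. Unset Printing Implicit Defensive.

Section Potential.
Variables (A X : Type) (step : A -> X -> X) (inv : X -> Prop) (D : X -> nat).
Hypothesis step_inv : forall a x, inv x -> inv (step a x).

Definition run (w : seq A) (x : X) : X := foldl (fun x a => step a x) x w.

Lemma run_inv w x : inv x -> inv (run w x).
Proof. by elim: w x => //= a w IH x x_inv; apply/IH/step_inv. Qed.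

Lemma potential_le_size_run :
  (forall a x, inv x -> D x <= (D (step a x)).+1) ->
  forall w x, inv x -> D x <= size w + D (run w x).
Proof.
move=> D_lip; elim=> [|a w IH] x x_inv //=.
have := IH _ (step_inv a x_inv); have := D_lip a x x_inv; lia.
Qed.

Lemma potential_run_exact :
  (forall x, inv x -> 0 < D x -> exists a, (D (step a x)).+1 = D x) ->
  forall x, inv x -> exists2 w, size w = D x & D (run w x) = 0.
Proof.
move=> D_desc x x_inv; have [k Dx] : exists k, D x = k by exists (D x).
elim: k x Dx x_inv => [|k IH] x Dx x_inv; first by exists [::].
have [a Da] := D_desc x x_inv ltac:(by rewrite Dx).
have [w size_w Dw] := IH (step a x) ltac:(lia) (step_inv a x_inv).
by exists (a :: w); rewrite //= size_w.
Qed.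

End Potential.

Lemma mem2_eq_pair (T : eqType) (u v a b : T) : a != b ->
  [:: u; v] =i [:: a; b] <-> (u = a /\ v = b) \/ (u = b /\ v = a).
Proof.
move=> ab; split=> [eq_uv|]; last by case=> -[-> ->] x; rewrite // !inE orbC.
have := eq_uv a; have := eq_uv b; rewrite !inE !eqxx orbT /=.
case/orP=> /eqP bE; case/orP=> /eqP aE; subst; rewrite ?eqxx in ab; by [left|right].
Qed.

Lemma swap_in_cons p ps q : swap_in (p :: ps) q =
  if q == p.1 then p.2 else if q == p.2 then p.1 else swap_in ps q.
Proof. by []. Qed.

Lemma swap_in_notin ps q :
  (forall p, p \in ps -> (q != p.1) && (q != p.2)) -> swap_in ps q = q.
Proof.
elim: ps => [//|p ps IH] H; rewrite swap_in_cons.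
have /andP[/negbTE -> /negbTE ->] := H p (mem_head _ _).
by apply: IH => p' p'_in; apply: H; rewrite in_cons p'_in orbT.
Qed.

Lemma swap_in_fst ps a b : (a, b) \in ps ->
  (forall p, p \in ps -> (a == p.1) || (a == p.2) -> p = (a, b)) -> swap_in ps a = b.
Proof.
elim: ps => [//|p ps IH] ab_in H; rewrite swap_in_cons.
have Hp := H p (mem_head _ _).
case: ifP => [a1|a1]; first by rewrite Hp ?a1.
case: ifP => [a2|_].
  by move: (a2); rewrite Hp ?a2 ?orbT //= => /eqP ->.
apply: IH => [|p' p'_in]; last by apply: H; rewrite in_cons p'_in orbT.
by move: ab_in; rewrite in_cons => /orP[/eqP ab|//]; rewrite -ab eqxx in a1.
Qed.

Lemma swap_in_snd ps a b : (a, b) \in ps -> a != b ->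
  (forall p, p \in ps -> (b == p.1) || (b == p.2) -> p = (a, b)) -> swap_in ps b = a.
Proof.
elim: ps => [//|p ps IH] ab_in ab H; rewrite swap_in_cons.
have Hp := H p (mem_head _ _).
case: ifP => [b1|_].
  by move: ab (b1); rewrite Hp ?b1 //= eq_sym => /negbTE ->.
case: ifP => [b2|b2]; first by rewrite Hp ?b2 ?orbT.
apply: IH => // [|p' p'_in]; last by apply: H; rewrite in_cons p'_in orbT.
by move: ab_in; rewrite in_cons => /orP[/eqP ab'|//]; rewrite -ab' eqxx in b2.
Qed.

Lemma odd_pairsP n par p : p \in odd_pairs n par ->
  exists i, [/\ p = (2*i+1, 2*i+3), 1 <= i <= (n-3) %/ 2 & odd i = par].
Proof.
rewrite /odd_pairs => /mapP[i]; rewrite mem_filter mem_iota => /andP[/eqP par_i i_range] ->.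
by exists i; split => //; lia.
Qed.

Lemma odd_pairs_mem n par i : 1 <= i <= (n-3) %/ 2 -> odd i = par ->
  (2*i+1, 2*i+3) \in odd_pairs n par.
Proof.
move=> i_range par_i; apply: (map_f (fun i => (2*i+1, 2*i+3))).
by rewrite mem_filter mem_iota par_i eqxx /=; lia.
Qed.

Lemma even_pairsP n par p : p \in even_pairs n par ->
  exists j, [/\ p = (2*j, 2*j+2), 3 <= j < 3 + ((n-3) %/ 2 - 2) & odd j = par].
Proof.
rewrite /even_pairs => /mapP[j]; rewrite mem_filter mem_iota => /andP[/eqP par_j j_range] ->.
by exists j.
Qed.

Lemma even_pairs_mem n par j : 3 <= j < 3 + ((n-3) %/ 2 - 2) -> odd j = par ->
  (2*j, 2*j+2) \in even_pairs n par.
Proof.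
move=> j_range par_j; apply: (map_f (fun j => (2*j, 2*j+2))).
by rewrite mem_filter mem_iota par_j eqxx.
Qed.

Ltac case_pair_mem H :=
  first [ case/odd_pairsP: H => [i' [H Hi' Hp']]; subst
        | case/even_pairsP: H => [j' [H Hj' Hp']]; subst
        | move/eqP: H => H; subst ].

Ltac pairs_disjoint :=
  let p := fresh "p" in let Hp := fresh "Hp" in
  move=> p Hp; rewrite ?in_cons ?mem_cat in Hp;
  repeat (case/orP: Hp => Hp); case_pair_mem Hp;
  first [ let Hq := fresh "Hq" in move=> Hq; simpl in Hq; congr (_, _); lia
        | simpl; first [done | lia | (apply/andP; split; lia)] ].

Section Letters.
Variable t : nat.
Hypothesis t_ge2 : 2 <= t.
Local Notation n := (4*t+3).

Ltac unfold_act_a q := rewrite /act_a;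
  (have -> : (q == 1) = false by lia); (have -> : (q == 2) = false by lia);
  (have -> : (q == 3) = false by lia); (have -> : (q == 4) = false by lia).

Lemma act_a_4k1 k : 1 <= k -> 4*k+1 <= n -> act_a n (4*k+1) = 4*k+3.
Proof.
move=> k_ge1 k_le; unfold_act_a (4*k+1); apply: swap_in_fst; last pairs_disjoint.
rewrite mem_cat; apply/orP; left.
have -> : 4*k+1 = 2*(2*k)+1 by lia. have -> : 4*k+3 = 2*(2*k)+3 by lia.
by apply: odd_pairs_mem; lia.
Qed.

Lemma act_a_4k3 k : 1 <= k -> 4*k+3 <= n -> act_a n (4*k+3) = 4*k+1.
Proof.
move=> k_ge1 k_le; unfold_act_a (4*k+3); apply: swap_in_snd; [|lia|pairs_disjoint].
rewrite mem_cat; apply/orP; left.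
have -> : 4*k+1 = 2*(2*k)+1 by lia. have -> : 4*k+3 = 2*(2*k)+3 by lia.
by apply: odd_pairs_mem; lia.
Qed.

Lemma act_a_4k k : 2 <= k -> 4*k <= n-1 -> act_a n (4*k) = 4*k-2.
Proof.
move=> k_ge2 k_le; unfold_act_a (4*k); apply: swap_in_snd; [|lia|pairs_disjoint].
rewrite mem_cat; apply/orP; right.
have -> : 4*k-2 = 2*(2*k-1) by lia. have -> : 4*k = 2*(2*k-1)+2 by lia.
by apply: even_pairs_mem; lia.
Qed.

Lemma act_a_4k2 k : 1 <= k <= t-1 -> act_a n (4*k+2) = 4*k+4.
Proof.
move=> k_range; unfold_act_a (4*k+2); apply: swap_in_fst; last pairs_disjoint.
rewrite mem_cat; apply/orP; right.
have -> : 4*k+2 = 2*(2*k+1) by lia. have -> : 4*k+4 = 2*(2*k+1)+2 by lia.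
by apply: even_pairs_mem; lia.
Qed.

Lemma act_a_4t2 : act_a n (4*t+2) = 4*t+2.
Proof. unfold_act_a (4*t+2); apply: swap_in_notin; pairs_disjoint. Qed.

Lemma act_b_1 : act_b n 1 = 6.
Proof. by apply: swap_in_fst; [rewrite mem_head|pairs_disjoint]. Qed.

Lemma act_b_6 : act_b n 6 = 1.
Proof. by apply: swap_in_snd; [rewrite mem_head|by []|pairs_disjoint]. Qed.

Lemma act_b_2 : act_b n 2 = 2.
Proof. by apply: swap_in_notin; pairs_disjoint. Qed.

Lemma act_b_4 : act_b n 4 = 4.
Proof. by apply: swap_in_notin; pairs_disjoint. Qed.

Lemma act_b_4k1 k : 1 <= k -> 4*k+1 <= n -> act_b n (4*k+1) = 4*k-1.
Proof.
move=> k_ge1 k_le; apply: swap_in_snd; [|lia|pairs_disjoint].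
rewrite in_cons mem_cat; apply/orP; right; apply/orP; left.
have -> : 4*k-1 = 2*(2*k-1)+1 by lia. have -> : 4*k+1 = 2*(2*k-1)+3 by lia.
by apply: odd_pairs_mem; lia.
Qed.

Lemma act_b_4k3 k : k <= t-1 -> act_b n (4*k+3) = 4*k+5.
Proof.
move=> k_le; apply: swap_in_fst; last pairs_disjoint.
rewrite in_cons mem_cat; apply/orP; right; apply/orP; left.
have -> : 4*k+3 = 2*(2*k+1)+1 by lia. have -> : 4*k+5 = 2*(2*k+1)+3 by lia.
by apply: odd_pairs_mem; lia.
Qed.

Lemma act_b_n : act_b n n = n.
Proof. by apply: swap_in_notin; pairs_disjoint. Qed.

Lemma act_b_4k k : 2 <= k <= t -> act_b n (4*k) = 4*k+2.
Proof.
move=> k_range; apply: swap_in_fst; last pairs_disjoint.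
rewrite in_cons mem_cat; apply/orP; right; apply/orP; right.
have -> : 4*k = 2*(2*k) by lia.
by apply: even_pairs_mem; lia.
Qed.

Lemma act_b_4k2 k : 2 <= k <= t -> act_b n (4*k+2) = 4*k.
Proof.
move=> k_range; apply: swap_in_snd; [|lia|pairs_disjoint].
rewrite in_cons mem_cat; apply/orP; right; apply/orP; right.
have -> : 4*k = 2*(2*k) by lia.
by apply: even_pairs_mem; lia.
Qed.

End Letters.

(* Positions of the states on the n-gon, chosen so that the letters act by [perm]. *)
Definition coord (t q : nat) : Z :=
  let n := nstates (Z.of_nat t) in let k := Z.of_nat (q %/ 4) in
  if q == 1 then (n - 2)%Z else if q == 2 then 0%Z else if q == 4 then 1%Z
  else if q %% 4 == 1 then (2*k)%Z else if q %% 4 == 3 then (n-1-2*k)%Z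
  else if q %% 4 == 0 then (n - 2*k)%Z else (2*k+1)%Z.

Definition pair_step n l (p : nat * nat) := (act_letter n l p.1, act_letter n l p.2).

Lemma run_pair_step n w u v : run (pair_step n) w (u, v) = (act_word n w u, act_word n w v).
Proof. by elim: w u v => //= l w IH u v; rewrite IH. Qed.

Ltac solve_coord := repeat (case: ifP => ?); rewrite /nstates; lia.

Ltac solve_perm :=
  rewrite /perm_a /perm_b /nstates;
  repeat match goal with |- context[if ?c then _ else _] => destruct c eqn:? end; lia.

Section Coordinates.
Variable t : nat.
Hypothesis t_ge2 : 2 <= t.
Local Notation n := (4*t+3).
Local Notation tZ := (Z.of_nat t).

Lemma coord_1 : coord t 1 = (nstates tZ - 2)%Z. Proof. by []. Qed.
Lemma coord_2 : coord t 2 = 0%Z. Proof. by []. Qed.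
Lemma coord_3 : coord t 3 = (nstates tZ - 1)%Z. Proof. by rewrite /coord /nstates /=; lia. Qed.
Lemma coord_4 : coord t 4 = 1%Z. Proof. by []. Qed.

Lemma coord_4k1 k : 1 <= k -> coord t (4*k+1) = (2 * Z.of_nat k)%Z.
Proof. by move=> k_ge1; rewrite /coord; solve_coord. Qed.

Lemma coord_4k3 k : coord t (4*k+3) = (nstates tZ - 1 - 2 * Z.of_nat k)%Z.
Proof. by rewrite /coord; solve_coord. Qed.

Lemma coord_4k k : 2 <= k -> coord t (4*k) = (nstates tZ - 2 * Z.of_nat k)%Z.
Proof. by move=> k_ge2; rewrite /coord; solve_coord. Qed.

Lemma coord_4k2 k : 1 <= k -> coord t (4*k+2) = (2 * Z.of_nat k + 1)%Z.
Proof. by move=> k_ge1; rewrite /coord; solve_coord. Qed.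

Lemma coord_range q : 1 <= q <= n -> (0 <= coord t q < nstates tZ)%Z.
Proof. by move=> q_range; rewrite /coord; solve_coord. Qed.

Lemma coord_inj q q' : 1 <= q <= n -> 1 <= q' <= n -> coord t q = coord t q' -> q = q'.
Proof. by move=> q_range q'_range; rewrite /coord; solve_coord. Qed.

Variant state_spec q : Prop :=
  | State1 of q = 1
  | State2 of q = 2
  | State4 of q = 4
  | State4k1 k of 1 <= k & q = 4*k+1
  | State4k3 k of q = 4*k+3
  | State4k k of 2 <= k & q = 4*k
  | State4k2 k of 1 <= k & q = 4*k+2.

Lemma stateP q : 0 < q -> state_spec q.
Proof.
move=> q_gt0; have q_div := divn_eq q 4; have := ltn_pmod q (isT : 0 < 4).
case: (q %% 4) q_div => [|[|[|[|//]]]] q_div _; case: (ltnP q 5) => q5.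
- by apply: State4; lia.
- by apply: (@State4k _ (q %/ 4)); lia.
- by apply: State1; lia.
- by apply: (@State4k1 _ (q %/ 4)); lia.
- by apply: State2; lia.
- by apply: (@State4k2 _ (q %/ 4)); lia.
- by apply: (@State4k3 _ (q %/ 4)); lia.
- by apply: (@State4k3 _ (q %/ 4)); lia.
Qed.

Lemma coord_act_a q : 1 <= q <= n ->
  1 <= act_a n q <= n /\ coord t (act_a n q) = perm_a tZ (coord t q).
Proof.
move=> q_range.
have q_gt0 : 0 < q by case/andP: q_range.
case: (stateP q_gt0) q_range => [->|->|->|k k_ge1 ->|k ->|k k_ge2 ->|k k_ge1 ->] q_range.
- by rewrite (_ : act_a n 1 = 2) // coord_1 coord_2; split; [lia|solve_perm].
- by rewrite (_ : act_a n 2 = 3) // coord_2 coord_3; split; [lia|solve_perm].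
- by rewrite (_ : act_a n 4 = 1) // coord_4 coord_1; split; [lia|solve_perm].
- rewrite act_a_4k1 ?coord_4k1 ?coord_4k3; try lia; split; [lia|solve_perm].
- have [->|k_gt0] := posnP k.
    by rewrite (_ : act_a n 3 = 4) // coord_3 coord_4; split; [lia|solve_perm].
  rewrite act_a_4k3 ?coord_4k3 ?coord_4k1; try lia; split; [lia|solve_perm].
- rewrite act_a_4k ?coord_4k; try lia.
  have -> : 4*k-2 = 4*(k-1)+2 by lia.
  rewrite coord_4k2; try lia; split; [lia|solve_perm].
- have [k_lt|k_ge] := ltnP k t.
  + rewrite act_a_4k2; try lia; have -> : 4*k+4 = 4*(k+1) by lia.
    rewrite coord_4k ?coord_4k2; try lia; split; [lia|solve_perm].
  + have k_eq : k = t by lia.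
    subst k.
    rewrite act_a_4t2 // coord_4k2; try lia; split; [lia|solve_perm].
Qed.

Lemma coord_act_b q : 1 <= q <= n ->
  1 <= act_b n q <= n /\ coord t (act_b n q) = perm_b tZ (coord t q).
Proof.
move=> q_range.
have q_gt0 : 0 < q by case/andP: q_range.
case: (stateP q_gt0) q_range => [->|->|->|k k_ge1 ->|k ->|k k_ge2 ->|k k_ge1 ->] q_range.
- rewrite act_b_1 // coord_1 (coord_4k2 (k:=1)) //; split; [lia|solve_perm].
- by rewrite act_b_2.
- by rewrite act_b_4.
- rewrite act_b_4k1; try lia; have -> : 4*k-1 = 4*(k-1)+3 by lia.
  rewrite coord_4k3 coord_4k1; try lia; split; [lia|solve_perm].
- have [k_lt|k_ge] := ltnP k t.
  + rewrite act_b_4k3; try lia; have -> : 4*k+5 = 4*(k+1)+1 by lia.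
    rewrite coord_4k1 ?coord_4k3; try lia; split; [lia|solve_perm].
  + have k_eq : k = t by lia.
    subst k.
    rewrite act_b_n // coord_4k3; split; [lia|solve_perm].
- rewrite act_b_4k ?coord_4k ?coord_4k2; try lia; split; [lia|solve_perm].
- have [k_lt2|k_ge2] := ltnP k 2.
  + have k_eq : k = 1 by lia.
    subst k.
    rewrite act_b_6 // coord_1 (coord_4k2 (k:=1)) //; split; [lia|solve_perm].
  + rewrite act_b_4k2 ?coord_4k ?coord_4k2; try lia; split; [lia|solve_perm].
Qed.

Lemma coord_act_letter l q : 1 <= q <= n ->
  1 <= act_letter n l q <= n /\ coord t (act_letter n l q) = perm tZ l (coord t q).
Proof. by case: l; [apply: coord_act_a|apply: coord_act_b]. Qed.

End Coordinates.

Section Pairs.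
Variable t : nat.
Hypothesis t_ge2 : 2 <= t.
Local Notation n := (4*t+3).
Local Notation tZ := (Z.of_nat t).

Let tZ_ge2 : (2 <= tZ)%Z. Proof. lia. Qed.

Definition pair_ok (p : nat * nat) : Prop := [/\ 1 <= p.1 <= n, 1 <= p.2 <= n & p.1 <> p.2].

Definition pair_chord (p : nat * nat) : Z * Z := chord_of tZ (coord t p.1) (coord t p.2).

Definition pair_dist (p : nat * nat) : nat := Z.to_nat (dist tZ (pair_chord p)).

Lemma pair_coord_ok p : pair_ok p ->
  [/\ (0 <= coord t p.1 < nstates tZ)%Z, (0 <= coord t p.2 < nstates tZ)%Z
    & coord t p.1 <> coord t p.2].
Proof.
case=> p1_range p2_range p12; split; [exact: coord_range p1_range|exact: coord_range p2_range|].
by move/(coord_inj t_ge2 p1_range p2_range).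
Qed.

Lemma pair_chord_valid p : pair_ok p -> chord_valid tZ (pair_chord p).
Proof. by case/pair_coord_ok; apply: chord_of_valid. Qed.

Lemma pair_step_ok l p : pair_ok p -> pair_ok (pair_step n l p).
Proof.
move=> p_ok; have [p1_range p2_range _] := p_ok; have [c1 c2 c12] := pair_coord_ok p_ok.
have [lp1_range lp1] := coord_act_letter t_ge2 l p1_range.
have [lp2_range lp2] := coord_act_letter t_ge2 l p2_range.
split=> //= lp12; apply: (perm_inj _ l _ _ tZ_ge2 c1 c2 c12).
by rewrite -lp1 -lp2 lp12.
Qed.

Lemma pair_chord_step l p : pair_ok p ->
  pair_chord (pair_step n l p) = chord_step tZ l (pair_chord p).
Proof.
move=> p_ok; have [p1_range p2_range _] := p_ok; have [c1 c2 c12] := pair_coord_ok p_ok.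
rewrite /pair_chord /= (coord_act_letter t_ge2 l p1_range).2.
by rewrite (coord_act_letter t_ge2 l p2_range).2 chord_of_perm.
Qed.

Lemma pair_dist_lip l p : pair_ok p -> pair_dist p <= (pair_dist (pair_step n l p)).+1.
Proof.
move=> p_ok; rewrite /pair_dist pair_chord_step //.
have := dist_lip _ l _ tZ_ge2 (pair_chord_valid p_ok); lia.
Qed.

Lemma pair_dist_desc p : pair_ok p -> 0 < pair_dist p ->
  exists l, (pair_dist (pair_step n l p)).+1 = pair_dist p.
Proof.
move=> p_ok; rewrite /pair_dist => dist_pos.
have [l dist_l] := dist_desc _ _ tZ_ge2 (pair_chord_valid p_ok) ltac:(lia).
by exists l; rewrite pair_chord_step //; lia.
Qed.

Lemma pair_dist_eq0_dist p : pair_ok p -> pair_dist p = 0 <-> dist tZ (pair_chord p) = 0%Z.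
Proof.
move=> p_ok; have := dist_ge0 _ _ tZ_ge2 (pair_chord_valid p_ok).
by rewrite /pair_dist; split; lia.
Qed.

Lemma pair_dist_start : pair_dist (2, 4) = 4*t*t + 11*t - 1.
Proof. by rewrite /pair_dist /pair_chord /= coord_2 coord_4 dist_start //; nia. Qed.

Lemma dist_pair_chord_target : dist tZ (pair_chord (2*t+1, 2*t+3)) = 0%Z.
Proof.
rewrite /pair_chord /=; case: (boolP (odd t)) => t_odd.
- have [s t_eq] : exists s, t = 2*s+1 by exists t./2; lia.
  have -> : 2*t+1 = 4*s+3 by lia.
  have -> : 2*t+3 = 4*(s+1)+1 by lia.
  rewrite coord_4k3 // coord_4k1 //; last lia.
  have -> : tZ = (2 * Z.of_nat s + 1)%Z by lia.
  have -> : (nstates (2 * Z.of_nat s + 1) - 1 - 2 * Z.of_nat s = 6 * Z.of_nat s + 6)%Z.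
    by rewrite /nstates; lia.
  have -> : (2 * Z.of_nat (s+1) = 2 * Z.of_nat s + 2)%Z by lia.
  by apply: dist_target_odd; lia.
- have [s t_eq] : exists s, t = 2*s by exists t./2; lia.
  have -> : 2*t+1 = 4*s+1 by lia.
  have -> : 2*t+3 = 4*s+3 by lia.
  rewrite coord_4k1 // ?coord_4k3 //; last lia.
  have -> : tZ = (2 * Z.of_nat s)%Z by lia.
  have -> : (nstates (2 * Z.of_nat s) - 1 - 2 * Z.of_nat s = 6 * Z.of_nat s + 2)%Z.
    by rewrite /nstates; lia.
  by apply: dist_target_even; lia.
Qed.

Lemma pair_dist_eq0 p : pair_ok p ->
  pair_dist p = 0 <-> (p.1 = 2*t+1 /\ p.2 = 2*t+3) \/ (p.1 = 2*t+3 /\ p.2 = 2*t+1).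
Proof.
case: p => u v p_ok /=; have [/= u_range v_range _] := p_ok.
have [/= cu cv cuv] := pair_coord_ok p_ok.
have tgt_ok : pair_ok (2*t+1, 2*t+3) by split=> /=; lia.
have [ca cb cab] := pair_coord_ok tgt_ok; move: ca cb cab => /= ca cb cab.
rewrite pair_dist_eq0_dist //; split=> [dist0|[[/= -> ->]|[/= -> ->]]].
- have := dist_eq0_unique _ _ _ tZ_ge2 (pair_chord_valid p_ok) (pair_chord_valid tgt_ok).
  move=> /(_ dist0 dist_pair_chord_target) /(chord_of_inj _ _ _ _ _ tZ_ge2 cu cv cuv ca cb cab).
  have inj := coord_inj t_ge2; have a_range : 1 <= 2*t+1 <= n by lia.
  have b_range : 1 <= 2*t+3 <= n by lia.
  by case=> [[/(inj _ _ u_range a_range) -> /(inj _ _ v_range b_range) ->]|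
              [/(inj _ _ u_range b_range) -> /(inj _ _ v_range a_range) ->]]; [left|right].
- exact: dist_pair_chord_target.
- by rewrite /pair_chord /= chord_of_sym; [exact: dist_pair_chord_target|auto].
Qed.

End Pairs.

Lemma pair_ok_start t : 2 <= t -> pair_ok t (2, 4).
Proof. by move=> t_ge2; split=> /=; lia. Qed.

Lemma act_set_target_iff t w : 2 <= t ->
  act_set (4*t+3) [:: 2; 4] w =i [:: 2*t+1; 2*t+3] <->
  pair_dist t (run (pair_step (4*t+3)) w (2, 4)) = 0.
Proof.
move=> t_ge2; have := run_inv (pair_step_ok t_ge2) w (pair_ok_start t_ge2).
rewrite run_pair_step => run_ok.
have ab : 2*t+1 != 2*t+3 by apply/eqP; lia.
exact: iff_trans (@mem2_eq_pair _ _ _ _ _ ab) (iff_sym (pair_dist_eq0 t_ge2 run_ok)).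
Qed.

Theorem mainTheorem10 (n : nat) :
  7 < n -> n %% 4 = 3 ->
  let k := (n - 5) %/ 2 in
  let L := (n ^ 2 + 5 * n - 28) %/ 4 in
  (exists w : seq letter, size w = L /\ act_set n [:: 2; 4] w =i [:: k + 2; k + 4]) /\
  (forall w : seq letter, act_set n [:: 2; 4] w =i [:: k + 2; k + 4] -> L <= size w).
Proof.
move=> n_gt7 n_mod4; cbv zeta.
have [t -> t_ge2] : exists2 t, n = 4*t+3 & 2 <= t by exists (n %/ 4); lia.
have -> : (4*t+3-5) %/ 2 + 2 = 2*t+1 by lia.
have -> : (4*t+3-5) %/ 2 + 4 = 2*t+3 by lia.
have -> : ((4*t+3)^2 + 5*(4*t+3) - 28) %/ 4 = pair_dist t (2, 4).
  by rewrite pair_dist_start // expnS expn1; nia.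
have start_ok := pair_ok_start t_ge2.
split.
- have [w size_w reach_w] := potential_run_exact (pair_step_ok t_ge2) (pair_dist_desc t_ge2) start_ok.
  by exists w; split=> //; apply/act_set_target_iff.
- move=> w /(act_set_target_iff _ t_ge2) reach_w.
  by have := potential_le_size_run (pair_step_ok t_ge2) (pair_dist_lip t_ge2) w start_ok; rewrite reach_w addn0.
Qed.
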